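(* For $w\in[0,1]$, $\delta\in\{0,1\}$ and $p\in(0,1)$, let $l(w,\delta,p)=(1-wp)^{1-\delta}$ and $\tilde l(w,\delta,p)=(1-p)^{w(1-\delta)}$, and let $d(w,\delta,p)=|l(w,\delta,p)-\tilde l(w,\delta,p)|$. Then for all such $w,\delta,p$, \[ d(w,\delta,p)\le (1-\beta p)-(1-p)^{\beta},\qquad\text{where } \beta=\frac{\log\{-p/\log(1-p)\}}{\log(1-p)}. \] In particular, for any $p\in(0,0.4]$ and all $w\in[0,1]$, $\delta\in\{0,1\}$, one has $d(w,\delta,p)<0.0255$.
   Context: This arises in a dose-finding likelihood: $p$ is the toxicity probability at a dose, $\delta$ indicates whether a patient's binary toxicity outcome has been ascertained ($\delta=1$) or is still pending ($\delta=0$), and $w$ is a weight in $[0,1]$ equal to the probability that a patient who will eventually experience toxicity has already experienced it by the current follow-up time. The factor $(1-wp)^{1-\delta}$ is the exact likelihood contribution of a pending patient and $(1-p)^{w(1-\delta)}$ is its approximation. *)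

From Stdlib Require Import Reals.
Open Scope R_scope.

Definition lik (w delta p : R) : R := Rpower (1 - w * p) (1 - delta).

Definition lik_approx (w delta p : R) : R := Rpower (1 - p) (w * (1 - delta)).

Definition dist_lik (w delta p : R) : R := Rabs (lik w delta p - lik_approx w delta p).

Definition beta (p : R) : R := ln (- p / ln (1 - p)) / ln (1 - p).

(** For a pending patient the two factors are [1 - w p] and [(1 - p)^w], so the
    distance is the gap [g(w) = 1 - w p - (1 - p)^w], which is nonnegative for
    [w] in [[0,1]] by Bernoulli's inequality. The map [w |-> (1 - p)^w] is convex
    and [beta] is the point where its slope equals [-p], so its tangent line at
    [beta] bounds [g(w)] by [g(beta)] for every [w]; for an ascertained outcome
    both factors are [1]. For the numerical claim, [g(w)] is nondecreasing in
    [p] (Bernoulli's inequality applied to the ratio [(1 - q)/(1 - p)]), so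
    [p = 2/5] is the worst case; there a tangent line at a rational point and
    alternating-series bounds for [exp] give [g(w) < 0.0255]. *)

From Stdlib Require Import Reals Factorial Psatz.
Open Scope R_scope.

Lemma exp_ge_tangent x c : exp c * (1 + (x - c)) <= exp x.
Proof.
  replace (exp x) with (exp c * exp (x - c)) by (rewrite <- exp_plus; f_equal; ring).
  apply Rmult_le_compat_l; [apply Rlt_le, exp_pos | apply exp_ineq1_le].
Qed.

Lemma Rpower_le_affine x w : 0 < x -> 0 <= w <= 1 -> Rpower x w <= w * x + (1 - w).
Proof.
  intros Hx Hw; unfold Rpower.
  pose proof (exp_ge_tangent (ln x) (w * ln x)) as Htan1.
  pose proof (exp_ge_tangent 0 (w * ln x)) as Htan0.
  rewrite exp_ln in Htan1 by exact Hx; rewrite exp_0 in Htan0.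
  pose proof (exp_pos (w * ln x)).
  nra.
Qed.

Lemma ln_lt_0 x : 0 < x < 1 -> ln x < 0.
Proof. intros Hx; rewrite <- ln_1; apply ln_increasing; lra. Qed.

Lemma Rpower_ge_base x w : 0 < x < 1 -> w <= 1 -> x <= Rpower x w.
Proof.
  intros Hx Hw; unfold Rpower.
  pose proof (exp_ge_tangent (w * ln x) (ln x)) as Htan.
  rewrite exp_ln in Htan by lra.
  assert (0 <= (1 - w) * - ln x) by (pose proof (ln_lt_0 x Hx); nra).
  nra.
Qed.

Definition pending_gap (w p : R) : R := 1 - w * p - Rpower (1 - p) w.

Lemma pending_gap_ge0 w p : 0 < p < 1 -> 0 <= w <= 1 -> 0 <= pending_gap w p.
Proof.
  intros Hp Hw; unfold pending_gap.
  pose proof (Rpower_le_affine (1 - p) w ltac:(lra) Hw); lra.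
Qed.

Lemma dist_lik_pending w p : 0 < p < 1 -> 0 <= w <= 1 ->
  dist_lik w 0 p = pending_gap w p.
Proof.
  intros Hp Hw; unfold dist_lik, lik, lik_approx.
  rewrite Rminus_0_r, Rmult_1_r, Rpower_1 by nra.
  apply Rabs_right, Rle_ge, pending_gap_ge0; assumption.
Qed.

Lemma dist_lik_observed w p : 0 < p < 1 -> 0 <= w <= 1 -> dist_lik w 1 p = 0.
Proof.
  intros Hp Hw; unfold dist_lik, lik, lik_approx.
  rewrite Rminus_diag, Rmult_0_r, !Rpower_O by nra.
  rewrite Rminus_diag; apply Rabs_R0.
Qed.

Lemma Rpower_beta p : 0 < p < 1 -> Rpower (1 - p) (beta p) = - p / ln (1 - p).
Proof.
  intros Hp; pose proof (ln_lt_0 (1 - p) ltac:(lra)) as HL.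
  unfold Rpower, beta.
  replace (ln (- p / ln (1 - p)) / ln (1 - p) * ln (1 - p))
    with (ln (- p / ln (1 - p))) by (field; lra).
  apply exp_ln, Rdiv_neg_neg; lra.
Qed.

Lemma pending_gap_le_beta w p : 0 < p < 1 -> pending_gap w p <= pending_gap (beta p) p.
Proof.
  intros Hp; pose proof (ln_lt_0 (1 - p) ltac:(lra)) as HL.
  unfold pending_gap; rewrite Rpower_beta by exact Hp.
  pose proof (exp_ge_tangent (w * ln (1 - p)) (beta p * ln (1 - p))) as Htan.
  change (exp (beta p * ln (1 - p))) with (Rpower (1 - p) (beta p)) in Htan.
  rewrite Rpower_beta in Htan by exact Hp.
  replace (- p / ln (1 - p) * (1 + (w * ln (1 - p) - beta p * ln (1 - p))))
    with (- p / ln (1 - p) - p * w + p * beta p) in Htan by (field; lra).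
  unfold Rpower; lra.
Qed.

Lemma pending_gap_le_mono w p q : 0 <= w <= 1 -> 0 < p <= q -> q < 1 ->
  pending_gap w p <= pending_gap w q.
Proof.
  intros Hw Hp Hq; unfold pending_gap.
  set (s := (1 - q) / (1 - p)).
  assert (Hqs : 1 - q = s * (1 - p)) by (unfold s; field; lra).
  assert (Hs : 0 < s <= 1) by (split; nra).
  assert (Hsplit : Rpower (1 - q) w = Rpower s w * Rpower (1 - p) w).
  { rewrite Rpower_mult_distr by lra; f_equal; unfold s; field; lra. }
  pose proof (Rpower_le_affine s w ltac:(lra) Hw) as Hbern.
  pose proof (Rpower_ge_base (1 - p) w ltac:(lra) ltac:(lra)) as Hbase.
  assert (HE : 0 < Rpower (1 - p) w) by apply exp_pos.
  assert (w * (1 - s) * (1 - p) <= w * (1 - s) * Rpower (1 - p) w)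
    by (apply Rmult_le_compat_l; nra).
  rewrite Hsplit.
  nra.
Qed.

Lemma exp_alternating_bounds y N : -1 <= y <= 0 ->
  sum_f_R0 (fun k => y ^ k / INR (fact k)) (S (2 * N)) <= exp y <=
  sum_f_R0 (fun k => y ^ k / INR (fact k)) (2 * N).
Proof.
  intros Hy.
  set (u := fun k => (- y) ^ k / INR (fact k)).
  assert (Hterm : forall k, tg_alt u k = y ^ k / INR (fact k)).
  { intros k; unfold tg_alt, u, Rdiv.
    rewrite <- Rmult_assoc, <- Rpow_mult_distr; do 2 f_equal; ring. }
  assert (Hu0 : forall k, 0 <= u k).
  { intros k; apply Rmult_le_pos; [apply pow_le; lra |].
    apply Rlt_le, Rinv_0_lt_compat, INR_fact_lt_0. }
  assert (Hdecr : Un_decreasing u).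
  { intros k.
    assert (Hstep : u (S k) = - y / INR (S k) * u k).
    { unfold u; rewrite fact_simpl, mult_INR; simpl pow.
      field; split; [apply INR_fact_neq_0 | apply not_0_INR; lia]. }
    assert (Hratio : - y / INR (S k) <= 1).
    { rewrite S_INR; pose proof (pos_INR k).
      apply Rmult_le_reg_r with (INR k + 1); [lra|].
      unfold Rdiv; rewrite Rmult_assoc, Rinv_l; lra. }
    rewrite Hstep; pose proof (Hu0 k).
    assert (0 <= - y / INR (S k)).
    { apply Rmult_le_pos; [lra | apply Rlt_le, Rinv_0_lt_compat, lt_0_INR; lia]. }
    nra. }
  assert (Hseries : Un_cv (fun n => sum_f_R0 (tg_alt u) n) (exp y)).
  { apply (Un_cv_ext (fun n => sum_f_R0 (fun i => / INR (fact i) * y ^ i) n)).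
    - intros n; apply sum_eq; intros i _; rewrite Hterm; unfold Rdiv; ring.
    - exact (proj2_sig (exist_exp y)). }
  pose proof (alternated_series_ineq u (exp y) N Hdecr (cv_speed_pow_fact (- y)) Hseries)
    as Hbounds.
  rewrite !(sum_eq (tg_alt u) (fun k => y ^ k / INR (fact k))) in Hbounds
    by (intros i _; apply Hterm).
  exact Hbounds.
Qed.

Lemma exp_ge_at_tangent_point : 783 / 1000 <= exp (-24462 / 100000).
Proof.
  destruct (exp_alternating_bounds (-24462 / 100000) 2 ltac:(lra)) as [Hlow _].
  simpl in Hlow.
  lra.
Qed.

Lemma ln_three_fifths_ge : -5109 / 10000 <= ln (3 / 5).
Proof.
  destruct (exp_alternating_bounds (-5109 / 10000) 3 ltac:(lra)) as [_ Hup].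
  simpl in Hup.
  pose proof (exp_ge_tangent (-5109 / 10000) (ln (3 / 5))) as Htan.
  rewrite exp_ln in Htan by lra.
  lra.
Qed.

Lemma pending_gap_two_fifths_lt w : 0 <= w <= 1 -> pending_gap w (2 / 5) < 255 / 10000.
Proof.
  intros Hw; unfold pending_gap, Rpower.
  replace (1 - 2 / 5) with (3 / 5) by lra.
  (* [c] approximates [beta p * ln (1 - p) = ln (- p / ln (1 - p))] at [p = 2/5]. *)
  set (c := -24462 / 100000).
  pose proof (exp_ge_tangent (w * ln (3 / 5)) c) as Htan.
  pose proof exp_ge_at_tangent_point as Hc.
  pose proof ln_three_fifths_ge as HL.
  pose proof (ln_lt_0 (3 / 5) ltac:(lra)).
  assert (783 / 1000 * (1 + (w * ln (3 / 5) - c)) <= exp c * (1 + (w * ln (3 / 5) - c)))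
    by (apply Rmult_le_compat_r; unfold c in *; nra).
  unfold c in *; nra.
Qed.

Theorem theorem1 :
  (forall w delta p : R,
      0 <= w <= 1 -> (delta = 0 \/ delta = 1) -> 0 < p < 1 ->
      dist_lik w delta p <= (1 - beta p * p) - Rpower (1 - p) (beta p))
  /\
  (forall w delta p : R,
      0 <= w <= 1 -> (delta = 0 \/ delta = 1) -> 0 < p <= 2 / 5 ->
      dist_lik w delta p < 255 / 10000).
Proof.
  split; intros w delta p Hw [-> | ->] Hp.
  - rewrite dist_lik_pending by lra.
    exact (pending_gap_le_beta w p Hp).
  - rewrite dist_lik_observed by lra.
    apply (Rle_trans _ (pending_gap 0 p)).
    + unfold pending_gap; rewrite Rpower_O by lra; lra.
    + exact (pending_gap_le_beta 0 p Hp).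
  - rewrite dist_lik_pending by lra.
    apply (Rle_lt_trans _ (pending_gap w (2 / 5))).
    + apply pending_gap_le_mono; lra.
    + exact (pending_gap_two_fifths_lt w Hw).
  - rewrite dist_lik_observed by lra; lra.
Qed.
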